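(* For every $n\in\mathbb N$ and every $\alpha\in(0,1)$ there exists $N\in\mathbb N$ such that the following holds: if $(X,d)$ is a metric space of cardinality at least $N$, then the metric space $(X,d^\alpha)$ does not admit an isometric embedding into any $n$-dimensional normed linear space.
   Context: For a metric space $(X,d)$ and $\alpha\in(0,1)$, $d^\alpha$ denotes the metric $(x,y)\mapsto d(x,y)^\alpha$; $(X,d^\alpha)$ is called the $\alpha$-snowflake of $(X,d)$. *)

From Stdlib Require Import Reals.
Open Scope R_scope.

Definition is_metric (X : Type) (d : X -> X -> R) : Prop :=
  (forall x y, 0 <= d x y) /\
  (forall x y, d x y = 0 <-> x = y) /\
  (forall x y, d x y = d y x) /\
  (forall x y z, d x z <= d x y + d y z).

(* t^a for t >= 0 (with 0^a = 0, as a > 0); Stdlib's Rpower is only meaningful for t > 0. *)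
Definition rpow_nn (t a : R) : R :=
  if Rle_dec t 0 then 0 else Rpower t a.

Definition snowflake (X : Type) (d : X -> X -> R) (alpha : R) : X -> X -> R :=
  fun x y => rpow_nn (d x y) alpha.

Definition card_ge (X : Type) (N : nat) : Prop :=
  exists f : nat -> X, forall i j, (i < N)%nat -> (j < N)%nat -> f i = f j -> i = j.

Definition is_normed_space (V : Type) (add : V -> V -> V) (scal : R -> V -> V)
  (zero : V) (opp : V -> V) (norm : V -> R) : Prop :=
  (forall u v w, add u (add v w) = add (add u v) w) /\
  (forall u v, add u v = add v u) /\
  (forall u, add u zero = u) /\
  (forall u, add u (opp u) = zero) /\
  (forall a b u, scal a (scal b u) = scal (a * b) u) /\
  (forall u, scal 1 u = u) /\
  (forall a u v, scal a (add u v) = add (scal a u) (scal a v)) /\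
  (forall a b u, scal (a + b) u = add (scal a u) (scal b u)) /\
  (forall u, 0 <= norm u) /\
  (forall u, norm u = 0 -> u = zero) /\
  (forall a u, norm (scal a u) = Rabs a * norm u) /\
  (forall u v, norm (add u v) <= norm u + norm v).

Fixpoint lin_comb (V : Type) (add : V -> V -> V) (scal : R -> V -> V) (zero : V)
  (e : nat -> V) (c : nat -> R) (k : nat) : V :=
  match k with
  | O => zero
  | S k' => add (lin_comb V add scal zero e c k') (scal (c k') (e k'))
  end.

Definition has_dim (V : Type) (add : V -> V -> V) (scal : R -> V -> V) (zero : V)
  (n : nat) : Prop :=
  exists e : nat -> V,
    (forall v, exists c : nat -> R, v = lin_comb V add scal zero e c n) /\
    (forall c : nat -> R, lin_comb V add scal zero e c n = zero ->
       forall i, (i < n)%nat -> c i = 0).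

Definition isometric_embedding (X V : Type) (d' : X -> X -> R)
  (add : V -> V -> V) (opp : V -> V) (norm : V -> R) (f : X -> V) : Prop :=
  forall x y, norm (add (f x) (opp (f y))) = d' x y.

From Stdlib Require Import Reals Lra Lia List ZArith ClassicalEpsilon.
From Coquelicot Require Import Compactness.
From Coquelicot Require Hierarchy.
Import ListNotations.

(* Fix a norm on R^n and pass to a basis w_0, ..., w_(n-1) of unit vectors, triangular
   with respect to a given basis, in which every vector has coordinates bounded by
   2 * 3^n times its norm (a Riesz-lemma construction).  Rounding these coordinates to a
   grid of mesh h colours the unit sphere with at most W^n colours, W depending only on
   n and h, so that equally coloured unit vectors are at distance at most n h.  Colour
   each pair i < j of the N embedded points by the direction of f(x_j) - f(x_i); when
   N > 2^(W^n), a Ramsey argument gives i < j < k for which the directions x_i x_j and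
   x_j x_k share a colour.  Then the triangle x_i x_j x_k is almost degenerate:
   a + b <= c + eps min(a, b) with eps <= n h.  For the snowflake distances
   a = A^alpha, b = B^alpha, c = C^alpha with C <= A + B this is impossible once
   alpha + eps < 1, because (A + B)^alpha <= A^alpha + alpha B^alpha when B <= A. *)

Lemma monochromatic_path {C : Type} (col : nat -> nat -> C) (L : list C) :
  forall vs : list nat, NoDup vs ->
  (forall i j, In i vs -> In j vs -> (i < j)%nat -> In (col i j) L) ->
  (2 ^ length L < length vs)%nat ->
  exists i j k, In i vs /\ In j vs /\ In k vs /\ (i < j < k)%nat /\ col i j = col j k.
Proof.
  induction L as [|c0 L IH]; intros vs Hnd Hcol Hlen.
  - destruct vs as [|a [|b vs]]; simpl in Hlen; try lia.
    inversion Hnd as [|? ? Hab]; subst.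
    assert (a <> b) by (intro; subst; apply Hab; left; reflexivity).
    exfalso. destruct (Nat.lt_ge_cases a b).
    + apply (Hcol a b); simpl; auto.
    + apply (Hcol b a); simpl; auto; lia.
  -
    set (entered := fun v => exists u, In u vs /\ (u < v)%nat /\ col u v = c0).
    set (dec := fun v => if excluded_middle_informative (entered v) then true else false).
    assert (Hdec : forall v, dec v = true <-> entered v).
    { intros v. unfold dec. destruct (excluded_middle_informative (entered v)); split; auto; discriminate. }
    assert (Hsub : forall S, NoDup S -> incl S vs -> (2 ^ length L < length S)%nat ->
              (forall i j, In i S -> In j S -> (i < j)%nat -> col i j <> c0) ->
              exists i j k, In i vs /\ In j vs /\ In k vs /\ (i < j < k)%nat /\ col i j = col j k).
    { intros S HS HSvs HSlen Hno.
      destruct (IH S HS) as (i & j & k & Hi & Hj & Hk & Hr); auto.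
      - intros i j Hi Hj Hij. destruct (Hcol i j (HSvs i Hi) (HSvs j Hj) Hij) as [E|E]; auto.
        exfalso. exact (Hno i j Hi Hj Hij (eq_sym E)).
      - exists i, j, k. auto. }
    pose proof (filter_length dec vs) as Hsplit. simpl in Hlen.
    destruct (Nat.lt_ge_cases (2 ^ length L) (length (filter (fun v => negb (dec v)) vs))).
    + apply (Hsub (filter (fun v => negb (dec v)) vs)); auto.
      * apply NoDup_filter; auto.
      * intros v Hv. apply filter_In in Hv. tauto.
      * intros i j Hi Hj Hij E. apply filter_In in Hi, Hj.
        assert (Hentered : dec j = true) by (apply Hdec; exists i; tauto).
        destruct Hj as [_ Hj]. rewrite Hentered in Hj. discriminate.
    + destruct (classic (exists i j, In i (filter dec vs) /\ In j (filter dec vs) /\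
                                     (i < j)%nat /\ col i j = c0))
        as [(i & j & Hi & Hj & Hij & Hc)|Hno].
      * apply filter_In in Hi, Hj. destruct Hi as [Hi Hi']. apply Hdec in Hi'.
        destruct Hi' as (u & Hu & Hui & Huc). exists u, i, j. intuition congruence.
      * apply (Hsub (filter dec vs)).
        -- apply NoDup_filter; auto.
        -- intros v Hv. apply filter_In in Hv. tauto.
        -- lia.
        -- intros i j Hi Hj Hij E. apply Hno. exists i, j. auto.
Qed.

Fixpoint words (n W : nat) : list (list nat) :=
  match n with
  | O => [nil]
  | S n' => flat_map (fun a => map (cons a) (words n' W)) (seq 0 W)
  end.

Lemma length_words n W : length (words n W) = (W ^ n)%nat.
Proof.
  induction n; simpl; auto.
  rewrite (flat_map_constant_length (c := (W ^ n)%nat)), length_seq; auto.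
  intros a _. rewrite length_map. exact IHn.
Qed.

Lemma in_words n W w : length w = n -> (forall a, In a w -> (a < W)%nat) -> In w (words n W).
Proof.
  revert w; induction n; intros w Hw Ha.
  - destruct w; simpl in *; [auto | lia].
  - destruct w as [|a w]; simpl in Hw; [lia|]. simpl. apply in_flat_map.
    exists a. split.
    + apply in_seq. assert (a < W)%nat by (apply Ha; left; reflexivity). lia.
    + apply in_map, IHn; [lia|]. intros b Hb. apply Ha. right; exact Hb.
Qed.

Open Scope R_scope.

Definition cell (A h r : R) : nat := Z.to_nat (Int_part ((r + A) / h)).

Definition grid_size (A h : R) : nat := Z.to_nat (up (2 * A / h)).

Lemma Int_part_nonneg x : 0 <= x -> (0 <= Int_part x)%Z.
Proof.
  intros Hx. destruct (base_Int_part x) as [H1 H2].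
  assert (-1 < IZR (Int_part x)) as H by lra. apply lt_IZR in H. lia.
Qed.

Lemma cell_lt_grid_size A h r : 0 < h -> Rabs r <= A -> (cell A h r < grid_size A h)%nat.
Proof.
  intros Hh Hr. unfold cell, grid_size.
  pose proof (Rle_abs r) as Hr1. pose proof (Rle_abs (- r)) as Hr2. rewrite Rabs_Ropp in Hr2.
  assert (H0 : 0 <= (r + A) / h) by (unfold Rdiv; apply Rmult_le_pos; [lra | left; apply Rinv_0_lt_compat; lra]).
  assert (H1 : (r + A) / h <= 2 * A / h) by (apply Rmult_le_compat_r; [left; apply Rinv_0_lt_compat|]; lra).
  pose proof (Int_part_nonneg _ H0).
  destruct (base_Int_part ((r + A) / h)) as [H2 _].
  destruct (archimed (2 * A / h)) as [H3 _].
  assert (Hlt : IZR (Int_part ((r + A) / h)) < IZR (up (2 * A / h))) by lra.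
  apply lt_IZR in Hlt. apply Z2Nat.inj_lt; lia.
Qed.

Lemma cell_eq_close A h r r' : 0 < h -> Rabs r <= A -> Rabs r' <= A ->
  cell A h r = cell A h r' -> Rabs (r - r') < h.
Proof.
  intros Hh Hr Hr' Heq. unfold cell in Heq.
  pose proof (Rle_abs r) as Hr1. pose proof (Rle_abs (- r)) as Hr2.
  pose proof (Rle_abs r') as Hr1'. pose proof (Rle_abs (- r')) as Hr2'.
  rewrite Rabs_Ropp in Hr2, Hr2'.
  apply Z2Nat.inj in Heq;
    try (apply Int_part_nonneg; unfold Rdiv; apply Rmult_le_pos; [lra | left; apply Rinv_0_lt_compat; lra]).
  destruct (base_Int_part ((r + A) / h)) as [H1 H2].
  destruct (base_Int_part ((r' + A) / h)) as [H3 H4].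
  rewrite Heq in H1, H2.
  assert (Hq : - 1 < (r + A) / h - (r' + A) / h < 1) by lra.
  replace (r - r') with (((r + A) / h - (r' + A) / h) * h) by (field; lra).
  apply Rabs_def1; nra.
Qed.

Fixpoint max_upto (f : nat -> R) (k : nat) : R :=
  match k with O => 0 | S k' => Rmax (max_upto f k') (f k') end.

Lemma le_max_upto f k j : (j < k)%nat -> f j <= max_upto f k.
Proof.
  induction k; intros Hj; [lia|]. simpl.
  destruct (Nat.eq_dec j k) as [->|]; [apply Rmax_r|].
  eapply Rle_trans; [apply IHk; lia | apply Rmax_l].
Qed.

Lemma max_upto_ge0 f k : 0 <= max_upto f k.
Proof. induction k; simpl; [lra|]. eapply Rle_trans; [exact IHk | apply Rmax_l]. Qed.

Lemma max_upto_attained f k : 0 < max_upto f k -> exists j, (j < k)%nat /\ f j = max_upto f k.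
Proof.
  induction k; simpl; intros Hpos; [lra|].
  unfold Rmax in *. destruct (Rle_dec (max_upto f k) (f k)).
  - exists k. split; [lia | reflexivity].
  - destruct (IHk Hpos) as (j & Hj & E). exists j. split; [lia | exact E].
Qed.

Lemma exists_half_minimizer {T : Type} (P : T -> Prop) (f : T -> R) (delta : R) :
  0 < delta -> (exists x, P x) -> (forall x, P x -> delta <= f x) ->
  exists x0, P x0 /\ forall x, P x -> f x0 < 2 * f x.
Proof.
  intros Hdelta [x1 Hx1] Hlow.
  set (E := fun r => exists x, P x /\ r = - f x).
  destruct (completeness E) as [m [Hub Hlub]].
  - exists 0. intros r (x & Hx & ->). pose proof (Hlow x Hx). lra.
  - exists (- f x1). exists x1. auto.
  - assert (Hinf : forall x, P x -> - m <= f x).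
    { intros x Hx. assert (E (- f x)) as H by (exists x; auto). apply Hub in H. lra. }
    assert (Hm : m <= - delta) by (apply Hlub; intros r (x & Hx & ->); pose proof (Hlow x Hx); lra).
    destruct (classic (exists x0, P x0 /\ f x0 < 2 * - m)) as [(x0 & Hx0 & Hlt)|Hno].
    + exists x0. split; auto. intros x Hx. pose proof (Hinf x Hx). lra.
    + exfalso. assert (m <= 2 * m); [|lra].
      apply Hlub. intros r (x & Hx & ->).
      destruct (Rlt_le_dec (f x) (2 * - m)); [exfalso; apply Hno; exists x; auto | lra].
Qed.

Section NormedSpace.
Variables (V : Type) (add : V -> V -> V) (scal : R -> V -> V) (zero : V)
  (opp : V -> V) (norm : V -> R).
Hypothesis HV : is_normed_space V add scal zero opp norm.

Let add_assoc : forall u v w, add u (add v w) = add (add u v) w. Proof. apply HV. Qed.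
Let add_comm : forall u v, add u v = add v u. Proof. apply HV. Qed.
Let add_zero : forall u, add u zero = u. Proof. apply HV. Qed.
Let add_opp : forall u, add u (opp u) = zero. Proof. apply HV. Qed.
Let scal_scal : forall a b u, scal a (scal b u) = scal (a * b) u. Proof. apply HV. Qed.
Let scal_one : forall u, scal 1 u = u. Proof. apply HV. Qed.
Let scal_add_vec : forall a u v, scal a (add u v) = add (scal a u) (scal a v). Proof. apply HV. Qed.
Let scal_add_scalar : forall a b u, scal (a + b) u = add (scal a u) (scal b u). Proof. apply HV. Qed.

Local Notation LC := (lin_comb V add scal zero).

Lemma add_cancel_l u v w : add u v = add u w -> v = w.
Proof.
  intros H.
  assert (add (opp u) (add u v) = add (opp u) (add u w)) as H' by (rewrite H; reflexivity).
  rewrite !add_assoc, (add_comm (opp u) u), add_opp, !(add_comm zero), !add_zero in H'.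
  exact H'.
Qed.

Lemma scal_0_l u : scal 0 u = zero.
Proof.
  apply (add_cancel_l (scal 0 u)).
  rewrite <- scal_add_scalar, Rplus_0_r, add_zero. reflexivity.
Qed.

Lemma scal_zero_r a : scal a zero = zero.
Proof. rewrite <- (scal_0_l zero), scal_scal, Rmult_0_r. reflexivity. Qed.

Lemma opp_eq_scal_m1 u : opp u = scal (-1) u.
Proof.
  apply (add_cancel_l u).
  rewrite add_opp. rewrite <- (scal_one u) at 1.
  rewrite <- scal_add_scalar. replace (1 + -1) with 0 by ring. rewrite scal_0_l. reflexivity.
Qed.

Lemma lin_comb_ext e c c' k : (forall i, (i < k)%nat -> c i = c' i) -> LC e c k = LC e c' k.
Proof.
  induction k; intros H; simpl; auto.
  rewrite IHk by (intros; apply H; lia). rewrite H by lia. reflexivity.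
Qed.

Lemma lin_comb_add e c c' k : LC e (fun i => c i + c' i) k = add (LC e c k) (LC e c' k).
Proof.
  induction k; simpl.
  - rewrite add_zero; reflexivity.
  - rewrite IHk, scal_add_scalar, <- !add_assoc. f_equal.
    rewrite (add_comm (LC e c' k)), <- !add_assoc. f_equal. apply add_comm.
Qed.

Lemma lin_comb_scal e c a k : LC e (fun i => a * c i) k = scal a (LC e c k).
Proof.
  induction k; simpl.
  - rewrite scal_zero_r; reflexivity.
  - rewrite IHk, scal_add_vec, scal_scal. reflexivity.
Qed.

Lemma lin_comb_sub e c c' k : LC e (fun i => c i - c' i) k = add (LC e c k) (opp (LC e c' k)).
Proof.
  rewrite opp_eq_scal_m1, <- lin_comb_scal, <- lin_comb_add.
  apply lin_comb_ext. intros; ring.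
Qed.

End NormedSpace.

(* A norm on R^n, with vectors represented by sequences of which only the first n
   entries matter. *)
Record is_Rn_norm (n : nat) (N : (nat -> R) -> R) : Prop := {
  Rn_norm_ext : forall c c', (forall i, (i < n)%nat -> c i = c' i) -> N c = N c';
  Rn_norm_triangle : forall c c', N (fun i => c i + c' i) <= N c + N c';
  Rn_norm_homogeneous : forall a c, N (fun i => a * c i) = Rabs a * N c;
  Rn_norm_definite : forall c, N c = 0 -> forall i, (i < n)%nat -> c i = 0 }.

Arguments Rn_norm_ext {n N}.
Arguments Rn_norm_triangle {n N}.
Arguments Rn_norm_homogeneous {n N}.
Arguments Rn_norm_definite {n N}.

Lemma coordinate_norm_is_Rn_norm V add scal zero opp norm (n : nat) (e : nat -> V) :
  is_normed_space V add scal zero opp norm ->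
  (forall c : nat -> R, lin_comb V add scal zero e c n = zero ->
     forall i, (i < n)%nat -> c i = 0) ->
  is_Rn_norm n (fun c => norm (lin_comb V add scal zero e c n)).
Proof.
  intros HV Hind. split.
  - intros c c' H. f_equal. apply (lin_comb_ext V add scal zero); auto.
  - intros c c'. rewrite (lin_comb_add V add scal zero opp norm HV). apply HV.
  - intros a c. rewrite (lin_comb_scal V add scal zero opp norm HV). apply HV.
  - intros c H. apply Hind. apply HV. exact H.
Qed.

Fixpoint comb (w : nat -> nat -> R) (t : nat -> R) (k : nat) (i : nat) : R :=
  match k with O => 0 | S k' => comb w t k' i + t k' * w k' i end.

Lemma comb_ext w t t' k i : (forall j, (j < k)%nat -> t j = t' j) -> comb w t k i = comb w t' k i.
Proof.
  induction k; intros H; simpl; auto.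
  rewrite IHk by (intros; apply H; lia). rewrite H by lia. reflexivity.
Qed.

Lemma comb_sub w s s' k i : comb w s k i - comb w s' k i = comb w (fun j => s j - s' j) k i.
Proof. induction k; simpl; [ring|]. rewrite <- IHk. ring. Qed.

Definition unit_seq (k i : nat) : R := if Nat.eq_dec i k then 1 else 0.

Lemma comb_unit_seq c k i : comb unit_seq c k i = if lt_dec i k then c i else 0.
Proof.
  induction k; simpl; [destruct (lt_dec i 0); [lia | reflexivity]|].
  rewrite IHk. unfold unit_seq.
  destruct (lt_dec i k), (lt_dec i (S k)), (Nat.eq_dec i k); subst; try lia; ring.
Qed.

Lemma bounded_n_mk_Tn k (a b c : nat -> R) : (forall j, (j < k)%nat -> a j <= c j <= b j) ->
  bounded_n k (Hierarchy.mk_Tn k a) (Hierarchy.mk_Tn k b) (Hierarchy.mk_Tn k c).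
Proof.
  revert a b c; induction k; intros a b c H; simpl; auto.
  split; [apply H; lia|]. apply IHk. intros; apply H; lia.
Qed.

Lemma close_n_coeff_Tn k d (x t : Tn k R) : close_n k d x t ->
  forall j, (j < k)%nat -> Rabs (Hierarchy.coeff_Tn 0 x j - Hierarchy.coeff_Tn 0 t j) < d.
Proof.
  revert x t; induction k; intros x t H j Hj; [lia|].
  destruct x as [x1 x2], t as [t1 t2]. destruct H as [H1 H2].
  destruct j; simpl; auto. apply IHk; auto; lia.
Qed.

Section RnNorm.
Variables (n : nat) (N : (nat -> R) -> R).
Hypothesis HN : is_Rn_norm n N.

Lemma Rn_norm_zero : N (fun _ => 0) = 0.
Proof.
  transitivity (N (fun i => 0 * 0)); [apply (Rn_norm_ext HN); intros; ring|].
  rewrite (Rn_norm_homogeneous HN), Rabs_R0. ring.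
Qed.

Lemma Rn_norm_scal_m1 c : N (fun i => -1 * c i) = N c.
Proof. rewrite (Rn_norm_homogeneous HN), Rabs_left by lra. ring. Qed.

Lemma Rn_norm_ge0 c : 0 <= N c.
Proof.
  pose proof (Rn_norm_triangle HN c (fun i => -1 * c i)) as H.
  rewrite Rn_norm_scal_m1 in H.
  rewrite (Rn_norm_ext HN _ (fun _ => 0)), Rn_norm_zero in H by (intros; ring). lra.
Qed.

Lemma Rn_norm_sub_sym c c' : N (fun i => c i - c' i) = N (fun i => c' i - c i).
Proof.
  rewrite <- Rn_norm_scal_m1. apply (Rn_norm_ext HN). intros; ring.
Qed.

Lemma Rn_norm_reverse_triangle c c' : N c' - N (fun i => c' i - c i) <= N c.
Proof.
  pose proof (Rn_norm_triangle HN c (fun i => c' i - c i)) as H.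
  rewrite (Rn_norm_ext HN _ c') in H by (intros; ring). lra.
Qed.

Lemma Rn_norm_comb_le w s k b M : (forall j, (j < k)%nat -> N (w j) <= M) ->
  (forall j, (j < k)%nat -> Rabs (s j) <= b) -> N (comb w s k) <= INR k * (b * M).
Proof.
  induction k; intros Hw Hs.
  - change (N (fun _ => 0) <= 0 * (b * M)). rewrite Rn_norm_zero. lra.
  - change (N (fun i => comb w s k i + s k * w k i) <= INR (S k) * (b * M)).
    eapply Rle_trans; [apply (Rn_norm_triangle HN)|].
    rewrite (Rn_norm_homogeneous HN), S_INR.
    assert (Hk : Rabs (s k) * N (w k) <= b * M).
    { apply Rmult_le_compat; auto using Rabs_pos, Rn_norm_ge0. }
    pose proof (IHk ltac:(auto) ltac:(auto)). lra.
Qed.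

Lemma Rn_norm_le_sup_bound : exists S, 0 < S /\
  forall c b, 0 <= b -> (forall j, (j < n)%nat -> Rabs (c j) <= b) -> N c <= S * b.
Proof.
  set (M := max_upto (fun j => N (unit_seq j)) n).
  assert (HM : 0 <= M) by apply max_upto_ge0.
  exists (INR n * M + 1). split; [pose proof (pos_INR n); nra|].
  intros c b Hb Hc.
  rewrite (Rn_norm_ext HN c (comb unit_seq c n)).
  - eapply Rle_trans.
    + apply (Rn_norm_comb_le _ _ _ b M); [|exact Hc].
      intros j Hj. apply (le_max_upto (fun j => N (unit_seq j))), Hj.
    + pose proof (pos_INR n). nra.
  - intros i Hi. rewrite comb_unit_seq. destruct (lt_dec i n); [reflexivity | lia].
Qed.

Lemma Rn_norm_bounded_below_on_sup_sphere : exists delta, 0 < delta /\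
  forall x, (forall j, (j < n)%nat -> Rabs (x j) <= 1) ->
    (exists j, (j < n)%nat /\ Rabs (x j) = 1) -> delta <= N x.
Proof.
  destruct Rn_norm_le_sup_bound as (S & HS & HSb).
  (* the neighbourhood size on which N stays above half its value at t,
     arbitrary where N vanishes *)
  set (gauge := fun t : Tn n R =>
    match Rlt_dec 0 (N (Hierarchy.coeff_Tn 0 t)) with
    | left Hpos => mkposreal _ (Rdiv_lt_0_compat _ _ Hpos (Rmult_lt_0_compat 2 S Rlt_0_2 HS))
    | right _ => mkposreal (/ 2) pos_half_prf
    end).
  destruct (compactness_value n (Hierarchy.mk_Tn n (fun _ => -1)) (Hierarchy.mk_Tn n (fun _ => 1)) gauge)
    as [d Hd].
  pose proof (cond_pos d) as Hd0.
  exists (S * d). split; [apply Rmult_lt_0_compat; lra|].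
  intros x Hx (j0 & Hj0 & Hxj0).
  destruct (Rle_lt_dec (S * d) (N x)) as [ok|Hsmall]; [exact ok | exfalso].
  apply (Hd (Hierarchy.mk_Tn n x)).
  { apply bounded_n_mk_Tn. intros j Hj. specialize (Hx j Hj).
    pose proof (Rle_abs (x j)). pose proof (Rle_abs (- x j)). rewrite Rabs_Ropp in *. lra. }
  intros (t & _ & Hclose & Hdt).
  set (t' := Hierarchy.coeff_Tn 0 t) in *.
  assert (Hclose' : forall j, (j < n)%nat -> Rabs (x j - t' j) < gauge t).
  { intros j Hj. rewrite <- (Hierarchy.coeff_Tn_bij 0 x j Hj). apply close_n_coeff_Tn; auto. }
  unfold gauge in Hclose', Hdt. fold t' in Hclose', Hdt.
  destruct (Rlt_dec 0 (N t')) as [Hpos|Hzero]; simpl in Hclose', Hdt.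
  - assert (Hhalf : N t' / 2 = S * (N t' / (2 * S))) by (field; lra).
    assert (Hnear : N (fun i => t' i - x i) <= N t' / 2).
    { rewrite Hhalf. apply HSb; [apply Rlt_le, Rdiv_lt_0_compat; lra|].
      intros j Hj. rewrite Rabs_minus_sym. left. apply Hclose'; auto. }
    assert (Hgauge : S * d <= N t' / 2) by (rewrite Hhalf; apply Rmult_le_compat_l; lra).
    pose proof (Rn_norm_reverse_triangle x t'). lra.
  - assert (Ht0 : N t' = 0) by (pose proof (Rn_norm_ge0 t'); lra).
    specialize (Hclose' j0 Hj0).
    rewrite (Rn_norm_definite HN t' Ht0 j0 Hj0), Rminus_0_r in Hclose'. lra.
Qed.

Lemma Rn_coord_le_norm : exists K, 0 < K /\
  forall c j, (j < n)%nat -> Rabs (c j) <= K * N c.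
Proof.
  destruct Rn_norm_bounded_below_on_sup_sphere as (delta & Hdelta & Hsphere).
  assert (HK : 0 < / delta) by (apply Rinv_0_lt_compat; lra).
  exists (/ delta). split; [exact HK|].
  intros c j Hj.
  set (M := max_upto (fun i => Rabs (c i)) n).
  assert (HcM : forall i, (i < n)%nat -> Rabs (c i) <= M)
    by (intros i Hi; apply (le_max_upto (fun i => Rabs (c i))); exact Hi).
  pose proof (Rn_norm_ge0 c).
  destruct (Rle_lt_or_eq_dec 0 M (max_upto_ge0 _ _)) as [HMpos|HM0].
  - destruct (max_upto_attained _ _ HMpos) as (j0 & Hj0 & Hmax). fold M in Hmax.
    assert (HMinv : 0 < / M) by (apply Rinv_0_lt_compat; lra).
    assert (Hscaled : delta <= N (fun i => / M * c i)).
    { apply Hsphere.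
      - intros i Hi. rewrite Rabs_mult, (Rabs_right (/ M)) by lra.
        apply (Rmult_le_reg_l M); [lra|]. rewrite <- Rmult_assoc, Rinv_r, Rmult_1_l, Rmult_1_r by lra.
        apply HcM, Hi.
      - exists j0. split; [exact Hj0|]. rewrite Rabs_mult, (Rabs_right (/ M)), Hmax by lra.
        field. lra. }
    rewrite (Rn_norm_homogeneous HN), (Rabs_right (/ M)) in Hscaled by lra.
    assert (M * delta <= N c).
    { apply (Rmult_le_compat_l M) in Hscaled; [|lra].
      rewrite <- Rmult_assoc, Rinv_r, Rmult_1_l in Hscaled by lra. lra. }
    assert (M <= / delta * N c).
    { apply (Rmult_le_reg_l delta); [lra|].
      rewrite <- Rmult_assoc, Rinv_r, Rmult_1_l by lra. lra. }
    pose proof (HcM j Hj). lra.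
  - pose proof (HcM j Hj). rewrite <- HM0 in *. nra.
Qed.

Definition supported_below (k : nat) (c : nat -> R) : Prop := forall i, (k <= i)%nat -> c i = 0.

Definition riesz_vector (k : nat) (w : nat -> R) : Prop :=
  supported_below (S k) w /\ w k <> 0 /\ N w = 1 /\
  forall c, supported_below k c -> 1 / 2 <= N (fun i => w i - c i).

Lemma exists_riesz_vector k : (k < n)%nat -> exists w, riesz_vector k w.
Proof.
  intros Hk.
  destruct Rn_coord_le_norm as (K & HK & Hcoord).
  set (f := fun c => N (fun i => unit_seq k i - c i)).
  assert (Hf : forall c, supported_below k c -> / K <= f c).
  { intros c Hc. pose proof (Hcoord (fun i => unit_seq k i - c i) k Hk) as H. simpl in H.
    unfold unit_seq in H. destruct (Nat.eq_dec k k) as [_|]; [|congruence].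
    rewrite (Hc k (le_n k)), Rminus_0_r, Rabs_R1 in H.
    apply (Rmult_le_reg_l K); [exact HK|]. rewrite Rinv_r by lra. exact H. }
  destruct (exists_half_minimizer (supported_below k) f (/ K)) as (c0 & Hc0 & Hmin).
  - apply Rinv_0_lt_compat, HK.
  - exists (fun _ => 0). intros i _. reflexivity.
  - exact Hf.
  - set (m0 := f c0).
    assert (Hm0 : 0 < m0) by (pose proof (Hf c0 Hc0); pose proof (Rinv_0_lt_compat K HK); unfold m0; lra).
    assert (Hm0inv : 0 < / m0) by (apply Rinv_0_lt_compat, Hm0).
    exists (fun i => / m0 * (unit_seq k i - c0 i)). split; [|split; [|split]].
    + intros i Hi. unfold unit_seq. rewrite (Hc0 i) by lia.
      destruct (Nat.eq_dec i k); [lia | ring].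
    + unfold unit_seq. rewrite (Hc0 k (le_n k)). destruct (Nat.eq_dec k k) as [_|]; [|congruence].
      rewrite Rminus_0_r, Rmult_1_r. lra.
    + rewrite (Rn_norm_homogeneous HN), Rabs_right by lra. fold (f c0) m0. field. lra.
    + intros c Hc.
      (* w - c is a multiple of the error of the approximation c0 + m0 c *)
      assert (Hs : supported_below k (fun i => c0 i + m0 * c i))
        by (intros i Hi; rewrite Hc0, Hc by exact Hi; ring).
      pose proof (Hmin _ Hs) as Hlt.
      rewrite (Rn_norm_ext HN _ (fun i => / m0 * (unit_seq k i - (c0 i + m0 * c i))))
        by (intros; field; lra).
      rewrite (Rn_norm_homogeneous HN), Rabs_right by lra.
      fold (f (fun i => c0 i + m0 * c i)).
      apply (Rmult_le_reg_l m0); [exact Hm0|].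
      rewrite <- Rmult_assoc, Rinv_r, Rmult_1_l by lra. fold m0 in Hlt. lra.
Qed.

Lemma riesz_peel k w c : riesz_vector k w -> supported_below (S k) c ->
  supported_below k (fun i => c i - c k / w k * w i) /\
  Rabs (c k / w k) <= 2 * N c /\ N (fun i => c i - c k / w k * w i) <= 3 * N c.
Proof.
  intros (Hw_supp & Hw_k & Hw_norm & Hw_far) Hc.
  set (t := c k / w k).
  set (c' := fun i => c i - t * w i).
  assert (Hc' : supported_below k c').
  { intros i Hi. unfold c'. destruct (Nat.eq_dec i k) as [->|].
    - unfold t. field. exact Hw_k.
    - rewrite Hc, Hw_supp by lia. ring. }
  assert (Ht : Rabs t <= 2 * N c).
  { destruct (Req_dec t 0) as [E|E]; [rewrite E, Rabs_R0; pose proof (Rn_norm_ge0 c); lra|].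
    assert (Hs : supported_below k (fun i => - c' i / t)) by (intros i Hi; rewrite Hc' by exact Hi; field; exact E).
    pose proof (Hw_far _ Hs) as Hfar.
    rewrite (Rn_norm_ext HN c (fun i => t * (w i - - c' i / t))) by (intros; unfold c'; field; exact E).
    rewrite (Rn_norm_homogeneous HN). pose proof (Rabs_pos t). nra. }
  split; [exact Hc'|]. split; [exact Ht|].
  rewrite (Rn_norm_ext HN c' (fun i => c i + - t * w i)) by (intros; unfold c'; ring).
  eapply Rle_trans; [apply (Rn_norm_triangle HN)|].
  rewrite (Rn_norm_homogeneous HN), Hw_norm, Rabs_Ropp. lra.
Qed.

Lemma triangular_decomposition (w : nat -> nat -> R) :
  (forall k, (k < n)%nat -> riesz_vector k (w k)) ->
  forall k, (k <= n)%nat -> forall c, supported_below k c ->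
  exists t, (forall i, c i = comb w t k i) /\
            forall j, (j < k)%nat -> Rabs (t j) <= 2 * 3 ^ k * N c.
Proof.
  intros Hw. induction k; intros Hk c Hc.
  - exists (fun _ => 0). split; [intros i; apply Hc; lia | intros; lia].
  - destruct (riesz_peel k (w k) c (Hw k ltac:(lia)) Hc) as (Hc' & Htk & Hnc').
    set (tk := c k / w k k) in *.
    destruct (IHk ltac:(lia) _ Hc') as (t' & Ht' & Ht'_bound).
    exists (fun j => if Nat.eq_dec j k then tk else t' j). split.
    + intros i. simpl. rewrite (comb_ext w _ t').
      2: { intros j Hj. destruct (Nat.eq_dec j k); [lia | reflexivity]. }
      rewrite <- Ht'. destruct (Nat.eq_dec k k) as [_|]; [ring | congruence].
    + assert (H3 : 1 <= 3 ^ k) by (apply pow_R1_Rle; lra).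
      pose proof (Rn_norm_ge0 c).
      intros j Hj. simpl. destruct (Nat.eq_dec j k).
      * nra.
      * eapply Rle_trans; [apply Ht'_bound; lia|].
        assert (0 <= 2 * 3 ^ k) by lra. nra.
Qed.

Lemma bounded_triangular_coordinates :
  exists (w : nat -> nat -> R) (T : (nat -> R) -> nat -> R),
    (forall k, (k < n)%nat -> N (w k) = 1) /\
    forall u, (forall i, (i < n)%nat -> u i = comb w (T u) n i) /\
              forall j, (j < n)%nat -> Rabs (T u j) <= 2 * 3 ^ n * N u.
Proof.
  destruct (choice (fun k w => (k < n)%nat -> riesz_vector k w)) as [w Hw].
  { intros k. destruct (lt_dec k n) as [Hk|Hk].
    - destruct (exists_riesz_vector k Hk) as [w Hw]. exists w. auto.
    - exists (fun _ => 0). intros; lia. }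
  destruct (choice (fun u t => (forall i, (i < n)%nat -> u i = comb w t n i) /\
                               forall j, (j < n)%nat -> Rabs (t j) <= 2 * 3 ^ n * N u)) as [T HT].
  { intros u.
    set (u' := fun i => if lt_dec i n then u i else 0).
    assert (Hu' : forall i, (i < n)%nat -> u i = u' i)
      by (intros i Hi; unfold u'; destruct (lt_dec i n); [reflexivity | lia]).
    destruct (triangular_decomposition w Hw n (le_n n) u') as (t & Ht & Htb).
    { intros i Hi. unfold u'. destruct (lt_dec i n); [lia | reflexivity]. }
    exists t. split.
    - intros i Hi. rewrite Hu', Ht by exact Hi. reflexivity.
    - rewrite (Rn_norm_ext HN u u' Hu'). exact Htb. }
  exists w, T. split; [|exact HT].
  intros k Hk. apply (Hw k Hk).
Qed.

Lemma unit_sphere_quantization (h : R) : 0 < h ->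
  exists q : (nat -> R) -> list nat,
    (forall u, N u = 1 -> In (q u) (words n (grid_size (2 * 3 ^ n) h))) /\
    (forall u v, N u = 1 -> N v = 1 -> q u = q v -> N (fun i => u i - v i) <= INR n * h).
Proof.
  intros Hh.
  destruct bounded_triangular_coordinates as (w & T & Hw & HT).
  set (A := 2 * 3 ^ n).
  assert (HTA : forall u j, N u = 1 -> (j < n)%nat -> Rabs (T u j) <= A).
  { intros u j Hu Hj. destruct (HT u) as [_ Hb]. rewrite <- (Rmult_1_r A), <- Hu. apply Hb, Hj. }
  exists (fun u => map (fun j => cell A h (T u j)) (seq 0 n)). split.
  - intros u Hu. apply in_words; [rewrite length_map, length_seq; reflexivity|].
    intros a Ha. apply in_map_iff in Ha. destruct Ha as (j & <- & Hj). apply in_seq in Hj.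
    apply cell_lt_grid_size; [exact Hh|]. apply HTA; [exact Hu | lia].
  - intros u v Hu Hv Hq.
    rewrite (Rn_norm_ext HN _ (comb w (fun j => T u j - T v j) n)).
    + rewrite <- (Rmult_1_r h). apply Rn_norm_comb_le; [intros; rewrite Hw by assumption; lra|].
      intros j Hj. left. apply (cell_eq_close A); auto.
      apply (proj1 map_ext_in_iff Hq). apply in_seq. lia.
    + intros i Hi. rewrite <- comb_sub. destruct (HT u) as [Hu' _]. destruct (HT v) as [Hv' _].
      rewrite <- Hu', <- Hv' by exact Hi. reflexivity.
Qed.

Definition Rn_dist (x y : nat -> R) : R := N (fun m => y m - x m).

Definition direction (x y : nat -> R) : nat -> R := fun i => / Rn_dist x y * (y i - x i).

Lemma Rn_norm_direction x y : 0 < Rn_dist x y -> N (direction x y) = 1.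
Proof.
  intros H. unfold direction. rewrite (Rn_norm_homogeneous HN), Rabs_right.
  - unfold Rn_dist in *. field. lra.
  - left. apply Rinv_0_lt_compat, H.
Qed.

Lemma almost_collinear_triangle x y z eps :
  0 < Rn_dist x y -> 0 < Rn_dist y z -> Rn_dist (direction y z) (direction x y) <= eps ->
  Rn_dist x y + Rn_dist y z <= Rn_dist x z + Rn_dist y z * eps /\
  Rn_dist x y + Rn_dist y z <= Rn_dist x z + Rn_dist x y * eps.
Proof.
  intros Ha Hb Heps.
  set (a := Rn_dist x y) in *. set (b := Rn_dist y z) in *.
  set (u := direction x y). set (v := direction y z).
  (* (a + b) u = (z - x) + b (u - v)  and  (a + b) v = (z - x) + a (v - u) *)
  assert (Hsplit : forall (p r : nat -> R) (s : R), 0 <= s ->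
            (forall i, (a + b) * p i = z i - x i + s * (p i - r i)) ->
            N p = 1 -> N (fun i => p i - r i) <= eps -> a + b <= Rn_dist x z + s * eps).
  { intros p r s Hs Hp Hp1 Hpr.
    rewrite <- (Rmult_1_r (a + b)), <- Hp1, <- (Rabs_right (a + b)), <- (Rn_norm_homogeneous HN) by lra.
    rewrite (Rn_norm_ext HN _ _ (fun i _ => Hp i)).
    eapply Rle_trans; [apply (Rn_norm_triangle HN)|].
    rewrite (Rn_norm_homogeneous HN), Rabs_right by lra.
    unfold Rn_dist. nra. }
  unfold Rn_dist in Heps.
  split.
  - apply (Hsplit u v); [lra | | apply Rn_norm_direction; exact Ha | exact Heps].
    intros i. unfold u, v, direction. fold a b. field. lra.
  - apply (Hsplit v u); [lra | | apply Rn_norm_direction; exact Hb |].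
    + intros i. unfold u, v, direction. fold a b. field. lra.
    + rewrite Rn_norm_sub_sym. exact Heps.
Qed.

Lemma many_points_almost_collinear_triple (h : R) (P : nat -> nat -> R) (M : nat) :
  0 < h -> (2 ^ (grid_size (2 * 3 ^ n) h ^ n) < M)%nat ->
  (forall i j, (i < M)%nat -> (j < M)%nat -> i <> j -> 0 < Rn_dist (P i) (P j)) ->
  exists i j k, (i < j < k)%nat /\ (k < M)%nat /\
    Rn_dist (P i) (P j) + Rn_dist (P j) (P k) <= Rn_dist (P i) (P k) + Rn_dist (P j) (P k) * (INR n * h) /\
    Rn_dist (P i) (P j) + Rn_dist (P j) (P k) <= Rn_dist (P i) (P k) + Rn_dist (P i) (P j) * (INR n * h).
Proof.
  intros Hh HM Hpos.
  destruct (unit_sphere_quantization h Hh) as (q & Hq_words & Hq_close).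
  destruct (monochromatic_path (fun i j => q (direction (P i) (P j))) (words n (grid_size (2 * 3 ^ n) h))
              (seq 0 M)) as (i & j & k & Hi & Hj & Hk & Hijk & Hcol).
  - apply seq_NoDup.
  - intros i j Hi Hj Hij. apply in_seq in Hi, Hj.
    apply Hq_words, Rn_norm_direction, Hpos; lia.
  - rewrite length_words, length_seq. exact HM.
  - apply in_seq in Hi, Hj, Hk.
    exists i, j, k. split; [exact Hijk|]. split; [lia|].
    apply almost_collinear_triangle; try (apply Hpos; lia).
    apply Hq_close; [apply Rn_norm_direction, Hpos; lia .. | exact Hcol].
Qed.

End RnNorm.

Lemma Rpower_le_tangent x a : 0 < x -> 0 < a < 1 -> Rpower x a <= 1 + a * (x - 1).
Proof.
  intros Hx Ha.
  set (m := 1 + a * (x - 1)).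
  assert (Hm : 0 < m) by (unfold m; nra).
  assert (ln_le : forall y, 0 < y -> ln y <= y - 1).
  { intros y Hy. pose proof (exp_ineq1_le (ln y)) as H. rewrite exp_ln in H; lra. }
  (* average the tangent-line bound for ln at x / m and at 1 / m, with weights a and 1 - a *)
  pose proof (ln_le (x / m) ltac:(apply Rdiv_lt_0_compat; lra)) as H1.
  pose proof (ln_le (/ m) ltac:(apply Rinv_0_lt_compat; lra)) as H2.
  rewrite ln_Rinv in H2 by lra. unfold Rdiv in H1. rewrite ln_mult, ln_Rinv in H1 by (try apply Rinv_0_lt_compat; lra).
  assert (a * (x * / m - 1) + (1 - a) * (/ m - 1) = 0) by (unfold m in *; field; lra).
  assert (Hlog : a * ln x <= ln m) by nra.
  unfold Rpower. rewrite <- (exp_ln m) by lra.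
  destruct (Rle_lt_or_eq_dec _ _ Hlog) as [Hlt|Heq]; [left; apply exp_increasing, Hlt | rewrite Heq; right; reflexivity].
Qed.

Lemma le_Rpower_le_1 r a : 0 < r <= 1 -> 0 < a < 1 -> r <= Rpower r a.
Proof.
  intros Hr Ha. unfold Rpower. rewrite <- (exp_ln r) at 1 by lra.
  destruct (Rle_lt_or_eq_dec _ _ (proj2 Hr)) as [Hlt| ->].
  - left. apply exp_increasing.
    assert (ln r < 0) by (rewrite <- ln_1; apply ln_increasing; lra). nra.
  - right. rewrite ln_1. f_equal. ring.
Qed.

Lemma Rpower_add_le A B a : 0 < B <= A -> 0 < a < 1 ->
  Rpower (A + B) a <= Rpower A a + a * Rpower B a.
Proof.
  intros HB Ha.
  set (r := B / A).
  assert (Hr : 0 < r <= 1).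
  { unfold r, Rdiv. split; [apply Rdiv_lt_0_compat; lra|].
    rewrite <- (Rinv_r A) by lra. apply Rmult_le_compat_r; [left; apply Rinv_0_lt_compat|]; lra. }
  assert (HA : 0 < Rpower A a) by apply exp_pos.
  replace (A + B) with (A * (1 + r)) by (unfold r; field; lra).
  replace B with (A * r) by (unfold r; field; lra).
  rewrite <- !Rpower_mult_distr by lra.
  pose proof (Rpower_le_tangent (1 + r) a ltac:(lra) Ha).
  pose proof (le_Rpower_le_1 r a Hr Ha).
  assert (Hb : Rpower (1 + r) a <= 1 + a * Rpower r a) by nra.
  apply (Rmult_le_compat_l (Rpower A a)) in Hb; lra.
Qed.

Lemma snowflake_not_almost_collinear a A B C eps :
  0 < a < 1 -> 0 < A -> 0 < B -> 0 < C <= A + B -> 0 <= eps -> a + eps < 1 ->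
  Rpower A a + Rpower B a <= Rpower C a + Rpower B a * eps ->
  Rpower A a + Rpower B a <= Rpower C a + Rpower A a * eps -> False.
Proof.
  intros Ha HA HB HC Heps Hae H1 H2.
  assert (HCAB : Rpower C a <= Rpower (A + B) a) by (apply Rle_Rpower_l; lra).
  assert (HpA : 0 < Rpower A a) by apply exp_pos.
  assert (HpB : 0 < Rpower B a) by apply exp_pos.
  destruct (Rle_dec B A).
  - pose proof (Rpower_add_le A B a ltac:(lra) Ha). nra.
  - rewrite Rplus_comm in HCAB. pose proof (Rpower_add_le B A a ltac:(lra) Ha). nra.
Qed.

Lemma snowflake_distinct X d alpha x y : is_metric X d -> x <> y ->
  0 < d x y /\ snowflake X d alpha x y = Rpower (d x y) alpha.
Proof.
  intros (Hd0 & Hdeq & _) Hxy.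
  assert (Hpos : 0 < d x y) by (destruct (Hd0 x y) as [|E]; [assumption | exfalso; apply Hxy, Hdeq; auto]).
  split; [exact Hpos|]. unfold snowflake, rpow_nn. destruct (Rle_dec (d x y) 0); [lra | reflexivity].
Qed.

Theorem theorem1p1 :
  forall (n : nat) (alpha : R), 0 < alpha < 1 ->
  exists N : nat,
    forall (X : Type) (d : X -> X -> R),
      is_metric X d -> card_ge X N ->
      forall (V : Type) (add : V -> V -> V) (scal : R -> V -> V) (zero : V)
             (opp : V -> V) (norm : V -> R),
        is_normed_space V add scal zero opp norm ->
        has_dim V add scal zero n ->
        ~ (exists f : X -> V,
             isometric_embedding X V (snowflake X d alpha) add opp norm f).
Proof.
  intros n alpha Halpha.
  set (h := (1 - alpha) / (INR n + 1)).
  assert (Hh : 0 < h) by (apply Rdiv_lt_0_compat; pose proof (pos_INR n); lra).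
  assert (Hnh : alpha + INR n * h < 1).
  { assert (h * (INR n + 1) = 1 - alpha) by (unfold h; field; pose proof (pos_INR n); lra). lra. }
  set (M := (2 ^ (grid_size (2 * 3 ^ n) h ^ n) + 1)%nat).
  exists M.
  intros X d Hd [g Hg] V add scal zero opp norm HV [e [Hspan Hind]] [F HF].
  set (N := fun c => norm (lin_comb V add scal zero e c n)).
  pose proof (coordinate_norm_is_Rn_norm V add scal zero opp norm n e HV Hind) as HN.
  destruct (choice _ Hspan) as [coords Hcoords].
  set (P := fun i => coords (F (g i))).
  assert (Hdist : forall i j, (i < M)%nat -> (j < M)%nat -> i <> j ->
            0 < d (g j) (g i) /\ Rn_dist N (P i) (P j) = Rpower (d (g j) (g i)) alpha).
  { intros i j Hi Hj Hij.
    unfold Rn_dist, N, P. rewrite (lin_comb_sub V add scal zero opp norm HV), <- !Hcoords, HF.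
    apply snowflake_distinct; [exact Hd|]. intros E. apply Hij, eq_sym, (Hg j i Hj Hi E). }
  destruct (many_points_almost_collinear_triple n N HN h P M Hh ltac:(unfold M; lia))
    as (i & j & k & Hijk & Hk & H1 & H2).
  { intros i j Hi Hj Hij. rewrite (proj2 (Hdist i j Hi Hj Hij)). apply exp_pos. }
  destruct (Hdist i j ltac:(lia) ltac:(lia) ltac:(lia)) as [Ha Eij].
  destruct (Hdist j k ltac:(lia) ltac:(lia) ltac:(lia)) as [Hb Ejk].
  destruct (Hdist i k ltac:(lia) ltac:(lia) ltac:(lia)) as [Hc Eik].
  rewrite Eij, Ejk, Eik in H1, H2.
  destruct Hd as (_ & _ & _ & Htri).
  apply (snowflake_not_almost_collinear alpha (d (g j) (g i)) (d (g k) (g j)) (d (g k) (g i)) (INR n * h));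
    auto.
  - split; [exact Hc|]. specialize (Htri (g k) (g j) (g i)). lra.
  - apply Rmult_le_pos; [apply pos_INR | lra].
Qed.
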